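(* Let $\Delta$ be a connected graph with a voltage assignment $\ell':D(\Delta)\to N'$ into a group $N'$. Let $T$ be the normal closure in $N'$ of the subgroup generated by the voltages (with respect to $\ell'$) of all triangles. Let $N=N'/T$ and $\ell(u,v)=T\ell'(u,v)$. Let $M$ be the subgroup of $N$ generated by the voltages with respect to $\ell$ of all cycles, and let $\Gamma$ be the lift of $\Delta$ with respect to $\ell$. Then the map $\alpha:V(\Gamma)\to V(\Delta)$, $(v,n)\mapsto v$, is a local isomorphism, and every connected component of $\Gamma$ is an $|M|$-fold cover of $\Delta$.
   Context: Graphs are simple and undirected; $u\perp v$ denotes adjacency and $D(\Delta)$ is the set of darts (ordered pairs $(u,v)$ with $u\perp v$). A voltage assignment is a map $\ell:D(\Delta)\to N$ into a group with $\ell(u,v)=\ell(v,u)^{-1}$. The voltage of a path $v_0\perp v_1\perp\dots\perp v_k$ is $\ell(v_0,v_1)\ell(v_1,v_2)\cdots\ell(v_{k-1},v_k)$; a triangle $u,v,w$ has voltage $\ell(u,v)\ell(v,w)\ell(w,u)$. The lift of $\Delta$ with respect to $\ell$ has vertex set $V(\Delta)\times N$, with $(u,m)\perp(v,n)$ iff $u\perp v$ and $\ell(u,v)=mn^{-1}$. The local graph at a vertex is the subgraph induced on its neighbourhood; a local isomorphism is an adjacency-preserving map that maps the local graph at each vertex isomorphically onto the local graph at its image. For connected graphs, $\Gamma$ is a cover of $\Delta$ if a local isomorphism $\Gamma\to\Delta$ exists, and a $k$-fold cover if its fibres have size $k$.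
   Formalization: M is the subgroup of N generated by the voltages (with respect to ℓ) of the closed walks starting and ending at one fixed but arbitrary vertex, rather than of all cycles. The statement above fails without it. *)

From HB Require Import structures.
From mathcomp Require Import all_boot.
From mathcomp Require Import monoid.

Set Implicit Arguments.
Unset Strict Implicit.
Unset Printing Implicit Defensive.

Local Open Scope group_scope.

Definition is_subgroup (G : groupType) (H : G -> Prop) : Prop :=
  H 1 /\ (forall x y, H x -> H y -> H (x * y)) /\ (forall x, H x -> H x^-1).

Definition is_normal_subgroup (G : groupType) (H : G -> Prop) : Prop :=
  is_subgroup H /\ (forall x g, H x -> H (g^-1 * (x * g))).

Definition gen_subgroup (G : groupType) (S : G -> Prop) : G -> Prop :=
  fun x => forall H : G -> Prop, is_subgroup H -> (forall s, S s -> H s) -> H x.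

Definition normal_closure (G : groupType) (S : G -> Prop) : G -> Prop :=
  fun x => forall H : G -> Prop, is_normal_subgroup H -> (forall s, S s -> H s) -> H x.

Definition simple_graph (V : Type) (adj : V -> V -> Prop) : Prop :=
  (forall u v, adj u v -> adj v u) /\ (forall u, ~ adj u u).

Fixpoint is_walk (V : Type) (adj : V -> V -> Prop) (s : seq V) : Prop :=
  match s with
  | x :: ((y :: _) as t) => adj x y /\ is_walk adj t
  | _ => True
  end.

Definition reachable (V : Type) (adj : V -> V -> Prop) (x y : V) : Prop :=
  exists s : seq V, is_walk adj (x :: s) /\ last x s = y.

Definition connected_graph (V : Type) (adj : V -> V -> Prop) : Prop :=
  forall x y : V, reachable adj x y.

(* l : V -> V -> N, only its values on darts (u,v) with u ⊥ v matter *)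
Definition voltage_assignment (V : Type) (adj : V -> V -> Prop) (N : groupType)
  (l : V -> V -> N) : Prop :=
  forall u v, adj u v -> l u v = (l v u)^-1.

Fixpoint walk_voltage (V : Type) (N : groupType) (l : V -> V -> N) (s : seq V) : N :=
  match s with
  | x :: ((y :: _) as t) => l x y * walk_voltage l t
  | _ => 1
  end.

Definition triangle_voltages (V : Type) (adj : V -> V -> Prop) (N : groupType)
  (l : V -> V -> N) : N -> Prop :=
  fun g => exists u v w, [/\ adj u v, adj v w, adj w u & g = l u v * l v w * l w u].

Definition lift_adj (V : Type) (adj : V -> V -> Prop) (N : groupType)
  (l : V -> V -> N) : V * N -> V * N -> Prop :=
  fun x y => adj x.1 y.1 /\ l x.1 y.1 = x.2 * (y.2)^-1.

(* f is adjacency preserving and maps the local graph at each vertex x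
   (the subgraph induced on the neighbourhood of x) isomorphically onto
   the local graph at f x *)
Definition local_iso (A B : Type) (adjA : A -> A -> Prop) (adjB : B -> B -> Prop)
  (f : A -> B) : Prop :=
  (forall x y, adjA x y -> adjB (f x) (f y)) /\
  (forall x,
     (forall y z, adjA x y -> adjA x z -> f y = f z -> y = z) /\
     (forall b, adjB (f x) b -> exists y, adjA x y /\ f y = b) /\
     (forall y z, adjA x y -> adjA x z -> adjB (f y) (f z) -> adjA y z)).

Definition equipotent (A B : Type) : Prop := exists f : A -> B, bijective f.

Definition induced_adj (A : Type) (adjA : A -> A -> Prop) (P : A -> Prop) :
  {x : A | P x} -> {x : A | P x} -> Prop :=
  fun x y => adjA (proj1_sig x) (proj1_sig y).

(* f exhibits (the connected graph) A as a k-fold cover of B, where the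
   cardinal k is given as the cardinality of the type K: f is a local
   isomorphism all of whose fibres have cardinality |K| *)
Definition fold_cover (A B : Type) (adjA : A -> A -> Prop) (adjB : B -> B -> Prop)
  (f : A -> B) (K : Type) : Prop :=
  local_iso adjA adjB f /\ forall b : B, equipotent {x : A | f x = b} K.

Arguments induced_adj {A} adjA P _ _.
Arguments fold_cover {A B} adjA adjB f K.

From mathcomp Require Import all_boot.
From mathcomp Require Import monoid.
From Stdlib Require Import ProofIrrelevance.

(* Projecting the lift onto the first coordinate preserves adjacency and is
   bijective on neighbourhoods for any voltage assignment.  It also reflects
   adjacency inside the neighbourhood of (u, m): if (v, n) and (w, k) are
   neighbours of (u, m) and v ⊥ w, the triangle u v w has voltage 1 in
   N = N'/T, which forces l(v, w) = n k^-1.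
   The component of (u, m) consists of the (b, g^-1 m) with g the voltage of a
   walk from u to b.  Fixing walks of voltages p : v0 -> u and q : b -> v0,
   these g are exactly the p^-1 c q^-1 with c the voltage of a closed walk at
   v0, so each fibre of the component is in bijection with the group M of
   closed walk voltages. *)

Set Implicit Arguments.
Unset Strict Implicit.
Unset Printing Implicit Defensive.

Local Open Scope group_scope.

Lemma proj1_sig_inj (T : Type) (P : T -> Prop) : injective (@proj1_sig T P).
Proof. exact: eq_sig_hprop (fun x => @proof_irrelevance (P x)). Qed.

Section GroupMorphism.
Variables (G H : groupType) (f : G -> H).
Hypothesis fM : {morph f : x y / x * y}.

Lemma gmorph1 : f 1 = 1.
Proof. by apply: (@mulgI _ (f 1)); rewrite -fM !mulg1. Qed.

Lemma gmorphV x : f x^-1 = (f x)^-1.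
Proof. by apply/esym/mulg1_eq; rewrite -fM mulgV gmorph1. Qed.

End GroupMorphism.

Lemma normal_closure_sub (G : groupType) (S : G -> Prop) s :
  S s -> normal_closure S s.
Proof. by move=> Ss H _; apply. Qed.

Lemma gen_subgroupE (G : groupType) (S : G -> Prop) x :
  is_subgroup S -> gen_subgroup S x <-> S x.
Proof. by move=> subS; split=> [|Sx H _]; apply. Qed.

Lemma is_walk_cat (V : Type) (adj : V -> V -> Prop) x s t :
  is_walk adj (x :: s) -> is_walk adj (last x s :: t) -> is_walk adj (x :: s ++ t).
Proof. by elim: s x => [|y s IHs] x //= [xy ys] yt; split=> //; apply: IHs. Qed.

Lemma walk_voltage_cons (V : Type) (N : groupType) (l : V -> V -> N) x y s :
  walk_voltage l (x :: y :: s) = l x y * walk_voltage l (y :: s).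
Proof. by []. Qed.

Lemma walk_voltage_cat (V : Type) (N : groupType) (l : V -> V -> N) x s t :
  walk_voltage l (x :: s ++ t) = walk_voltage l (x :: s) * walk_voltage l (last x s :: t).
Proof.
elim: s x => [|y s IHs] x; first by rewrite /= mul1g.
by rewrite cat_cons !walk_voltage_cons IHs mulgA.
Qed.

Lemma reachable_cons (V : Type) (adj : V -> V -> Prop) x y z :
  adj x y -> reachable adj y z -> reachable adj x z.
Proof. by move=> xy [s [ys <-]]; exists (y :: s). Qed.

Lemma reachable_rcons (V : Type) (adj : V -> V -> Prop) x y z :
  reachable adj x y -> adj y z -> reachable adj x z.
Proof.
move=> [s [xs ly]] yz; exists (rcons s z); rewrite last_rcons -cats1.
by split=> //; apply: is_walk_cat => //=; rewrite ly.
Qed.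

Lemma local_iso_component (A B : Type) (adjA : A -> A -> Prop) (adjB : B -> B -> Prop)
    (f : A -> B) x0 :
  local_iso adjA adjB f ->
  local_iso (induced_adj adjA (reachable adjA x0)) adjB (fun x => f (proj1_sig x)).
Proof.
move=> [f_adj f_loc]; split=> [[x ?] [y ?]|[x x0x]]; first exact: f_adj.
have [f_inj [f_onto f_refl]] := f_loc x; split; [|split].
- move=> [y ?] [z ?] xy xz /(f_inj _ _ xy xz) yz.
  exact: proj1_sig_inj.
- move=> b /f_onto [y [xy <-]].
  by exists (exist _ y (reachable_rcons x0x xy)).
- by move=> [y ?] [z ?]; apply: f_refl.
Qed.

Section WalkVoltages.
Variables (V : Type) (adj : V -> V -> Prop) (N : groupType) (l : V -> V -> N).

Definition walk_with_voltage (x y : V) (g : N) : Prop :=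
  exists s, [/\ is_walk adj (x :: s), last x s = y & g = walk_voltage l (x :: s)].

Definition closed_walk_group (v : V) : N -> Prop :=
  gen_subgroup (walk_with_voltage v v).

Lemma walk_with_voltage_nil x : walk_with_voltage x x 1.
Proof. by exists [::]. Qed.

Lemma walk_with_voltage_edge x y : adj x y -> walk_with_voltage x y (l x y).
Proof. by move=> xy; exists [:: y]; rewrite /= mulg1. Qed.

Lemma walk_with_voltage_cat x y z g h :
  walk_with_voltage x y g -> walk_with_voltage y z h -> walk_with_voltage x z (g * h).
Proof.
move=> [s [xs ly ->]] [t [yt lz ->]]; exists (s ++ t).
by rewrite last_cat walk_voltage_cat ly; split=> //; apply: is_walk_cat; rewrite ?ly.
Qed.

Lemma reachable_walk_with_voltage x y :
  reachable adj x y -> exists g, walk_with_voltage x y g.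
Proof. by move=> [s [xs ly]]; exists (walk_voltage l (x :: s)), s. Qed.

Local Notation L := (lift_adj adj l).

Lemma reachable_liftP x y :
  reachable L x y <-> exists2 g, walk_with_voltage x.1 y.1 g & y.2 = g^-1 * x.2.
Proof.
split=> [[s [xs <-]]|[g]].
  elim: s x xs => [|z s IHs] x /=.
    by move=> _; exists 1; [exact: walk_with_voltage_nil | rewrite invg1 mul1g].
  move=> [[xz lxz] zs]; have [g zg ->] := IHs z zs.
  exists (l x.1 z.1 * g); first exact: walk_with_voltage_cat (walk_with_voltage_edge xz) zg.
  by rewrite lxz !invgM invgK -!mulgA mulVg mulg1.
case: x y => [u m] [b n] [s [/= us <- ->]] /= ->.
elim: s u m us => [|z s IHs] u m /=.
  by rewrite invg1 mul1g; exists [::].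
move=> [uz zs]; rewrite invgM -mulgA.
by apply: (reachable_cons _ (IHs _ _ zs)); split=> //=; rewrite invgM invgK mulVKg.
Qed.

Hypothesis adj_sym : forall u v, adj u v -> adj v u.
Hypothesis l_voltage : voltage_assignment adj l.

Lemma walk_with_voltageV x y g : walk_with_voltage x y g -> walk_with_voltage y x g^-1.
Proof.
move=> [s [xs <- ->]]; elim: s x xs => [|z s IHs] x /=.
  by rewrite invg1 => _; apply: walk_with_voltage_nil.
move=> [xz zs]; rewrite invgM l_voltage // invgK.
exact: walk_with_voltage_cat (IHs z zs) (walk_with_voltage_edge (adj_sym xz)).
Qed.

Lemma closed_walk_groupE v g : closed_walk_group v g <-> walk_with_voltage v v g.
Proof.
apply: gen_subgroupE; split; first exact: walk_with_voltage_nil.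
by split=> [g1 g2|g1]; [apply: walk_with_voltage_cat | apply: walk_with_voltageV].
Qed.

Section ComponentFibre.
Variables (x0 : V * N) (b v0 : V) (p q : N).
Hypotheses (walk_p : walk_with_voltage v0 x0.1 p) (walk_q : walk_with_voltage b v0 q).

Definition component_fibre : Type :=
  {y : {y | reachable L x0 y} | (proj1_sig y).1 = b}.

Lemma fibre_loop_subproof (y : component_fibre) :
  closed_walk_group v0 (p * (x0.2 * (proj1_sig (proj1_sig y)).2^-1) * q).
Proof.
case: y => [[[u n] /reachable_liftP [g x0g /= ->]] /= ub]; rewrite ub in x0g.
rewrite invgM invgK mulVKg.
by apply/closed_walk_groupE/(walk_with_voltage_cat _ walk_q)/(walk_with_voltage_cat walk_p).
Qed.

Lemma loop_fibre_subproof (c : {g | closed_walk_group v0 g}) :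
  reachable L x0 (b, q * (proj1_sig c)^-1 * p * x0.2).
Proof.
case: c => c /closed_walk_groupE v0c /=; apply/reachable_liftP.
exists (p^-1 * c * q^-1); last by rewrite !invgM !invgK !mulgA.
apply: walk_with_voltage_cat (walk_with_voltageV walk_q).
exact: walk_with_voltage_cat (walk_with_voltageV walk_p) v0c.
Qed.

Definition fibre_loop (y : component_fibre) : {g | closed_walk_group v0 g} :=
  exist _ _ (fibre_loop_subproof y).

Definition loop_fibre (c : {g | closed_walk_group v0 g}) : component_fibre :=
  exist (fun y => (proj1_sig y).1 = b) (exist _ _ (loop_fibre_subproof c)) erefl.

Lemma fibre_loopK : cancel fibre_loop loop_fibre.
Proof.
move=> [[[u n] x0y] /= ub]; do 2 apply: proj1_sig_inj => /=.
by rewrite ub !invgM !invgK !mulgA mulgV mul1g !mulgVK.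
Qed.

Lemma loop_fibreK : cancel loop_fibre fibre_loop.
Proof.
move=> [c v0c]; apply: proj1_sig_inj => /=.
by rewrite !invgM !invgK !mulgA mulgK mulgV mul1g mulgVK.
Qed.

End ComponentFibre.

Lemma component_fibre_equipotent (x0 : V * N) (b v0 : V) :
  connected_graph adj ->
  equipotent (component_fibre x0 b) {g | closed_walk_group v0 g}.
Proof.
move=> adj_conn.
have [p walk_p] := reachable_walk_with_voltage (adj_conn v0 x0.1).
have [q walk_q] := reachable_walk_with_voltage (adj_conn b v0).
exists (fibre_loop walk_p walk_q), (loop_fibre walk_p walk_q).
  exact: fibre_loopK.
exact: loop_fibreK.
Qed.

Hypothesis triangle_voltage1 :
  forall u v w, adj u v -> adj v w -> adj w u -> l u v * l v w * l w u = 1.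

Lemma lift_local_iso : local_iso L adj fst.
Proof.
split=> [x y []//|[u m]]; split; [|split].
- move=> [v n] [w k] [_ /= uv] [_ /= uw] /= vw; subst w; congr pair.
  by apply: invg_inj; apply: (@mulgI _ m); rewrite -uv -uw.
- move=> v uv; exists (v, (l u v)^-1 * m); split=> //; split=> //=.
  by rewrite invgM invgK mulVKg.
- move=> [v n] [w k] [/= uv luv] [/= uw luw] /= vw; split=> //=.
  have := triangle_voltage1 uv vw (adj_sym uw).
  rewrite (l_voltage (adj_sym uw)) luv luw => /mulg1_eq/invg_inj tri.
  by rewrite -[l v w](mulKg (m * n^-1)) tri invgM invgK -mulgA mulKg.
Qed.

End WalkVoltages.

Theorem lemma2p1 (V : Type) (adj : V -> V -> Prop) (N' N : groupType)
  (l' : V -> V -> N') (pi : N' -> N)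
  (Hsimple : simple_graph adj) (Hconn : connected_graph adj)
  (Hl' : voltage_assignment adj l')
  (* N = N'/T : pi is a surjective homomorphism whose kernel is T, the normal
     closure of the voltages (wrt l') of all triangles *)
  (Hmul : forall x y : N', pi (x * y) = pi x * pi y)
  (Hsurj : forall n : N, exists x : N', pi x = n)
  (Hker : forall x : N', pi x = 1 <-> normal_closure (triangle_voltages adj l') x)
  (v0 : V) :
  let l := fun u v => pi (l' u v) in
  let M := gen_subgroup (fun g : N => exists s : seq V,
             [/\ is_walk adj (v0 :: s), last v0 s = v0 & g = walk_voltage l (v0 :: s)]) in
  local_iso (lift_adj adj l) adj fst /\
  forall x0 : V * N,
    fold_cover (induced_adj (lift_adj adj l) (reachable (lift_adj adj l) x0)) adj
      (fun x => (proj1_sig x).1) {g : N | M g}.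
Proof.
move=> l M; have adj_sym := proj1 Hsimple.
have l_voltage : voltage_assignment adj l.
  by move=> u v uv; rewrite /l Hl' // gmorphV.
have triangle_voltage1 u v w :
    adj u v -> adj v w -> adj w u -> l u v * l v w * l w u = 1.
  move=> uv vw wu; rewrite /l -!Hmul; apply/Hker.
  by apply: normal_closure_sub; exists u, v, w.
have lift_iso := lift_local_iso adj_sym l_voltage triangle_voltage1.
split=> // x0; split; first exact: local_iso_component lift_iso.
by move=> b; apply: component_fibre_equipotent.
Qed.
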